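(* Let $0<\alpha<1$, $0\le\rho<1-(1+\alpha)^{-1/2}$, $\gamma=(1+\alpha)(1-\rho)^2-1$, $\sigma=(1-\rho)(2-\rho)^{-1}$, and let $\ell$ be a positive integer with $\ell\ge 4\gamma^{-1}$. Let $\mathcal{C}\subseteq[q]^n$ be a code and $S\subseteq[n]$ with $|S|=m$. If $\mathcal{C}_S$ is not $(\rho,\ell,\ell(1+\alpha))$-list recoverable, then there is a set $\mathcal{C}'\subseteq\mathcal{C}_S$ with $|\mathcal{C}'|\le 10\sqrt{\ell/\gamma}$ and $|T_S(\mathcal{C}')|\ge\sigma m/4$.
   Context: For $S\subseteq[n]$, $\mathcal{C}_S\subseteq[q]^S$ denotes the puncturing of $\mathcal{C}$ to $S$ (restriction of each codeword to coordinates in $S$). A code $\mathcal{D}\subseteq[q]^S$ is $(\rho,\ell,L)$-list recoverable if for all sets $A_i\subseteq[q]$ ($i\in S$) with $|A_i|\le\ell$, at most $L$ codewords $c\in\mathcal{D}$ differ from $\prod_{i\in S}A_i$ in at most $\rho|S|$ coordinates (i.e. have $c[i]\notin A_i$ for at most $\rho|S|$ indices $i\in S$). For $\mathcal{C}'\subseteq\mathcal{C}_S$, $T_S(\mathcal{C}')$ is the set of coordinates $i\in S$ for which there exist two distinct $c_1,c_2\in\mathcal{C}'$ with $c_1[i]=c_2[i]$. *)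

From HB Require Import structures.
From mathcomp Require Import all_boot all_order all_algebra.
From mathcomp Require Import reals.
Set Implicit Arguments. Unset Strict Implicit. Unset Printing Implicit Defensive.
Import Order.TTheory GRing.Theory Num.Theory.

(* A word of [q]^S (S a set of coordinates) is
   represented as a function 'I_n -> option 'I_q which is Some _ exactly on S
   and None outside S. *)
Definition word (n q : nat) := {ffun 'I_n -> 'I_q}.
Definition sword (n q : nat) := {ffun 'I_n -> option 'I_q}.

Definition restrict n q (S : {set 'I_n}) (c : word n q) : sword n q :=
  [ffun i => if i \in S then Some (c i) else None].

Definition puncture n q (C : {set word n q}) (S : {set 'I_n}) : {set sword n q} :=
  restrict S @: C.

Definition disagree n q (S : {set 'I_n}) (A : 'I_n -> {set 'I_q}) (c : sword n q)
  : {set 'I_n} :=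
  [set i in S | match c i with Some x => x \notin A i | None => true end].

Definition list_recoverable (R : realType) n q (S : {set 'I_n})
  (D : {set sword n q}) (rho : R) (l : nat) (L : R) : Prop :=
  forall A : 'I_n -> {set 'I_q},
    (forall i, i \in S -> #|A i| <= l)%N ->
    (#|[set c in D | (#|disagree S A c|%:R <= rho * #|S|%:R)%R]|%:R <= L)%R.

Definition collide n q (S : {set 'I_n}) (C' : {set sword n q}) : {set 'I_n} :=
  [set i in S | [exists c1 in C', exists c2 in C', (c1 != c2) && (c1 i == c2 i)]].

From mathcomp Require Import all_boot all_order all_algebra reals.
From mathcomp Require Import zify ring lra.
From Stdlib Require Import Classical.
Import Order.TTheory GRing.Theory Num.Theory.
Set Implicit Arguments. Unset Strict Implicit. Unset Printing Implicit Defensive.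

(* A witness A of non-recoverability yields a set D0 of
   N = floor(l(1 + alpha)) + 1 words of C_S, each agreeing with A on all but
   rho|S| coordinates.  For i in S, the words of D0 agreeing with A at i take at
   most l symbols there, so a maximal matching of colliding pairs among them
   has at least (|X_i| - l)/2 pairs.  Counting, over all t-subsets of D0, the
   matched pairs inside the subset (a second-moment argument resting on
   C(N,t) C(N-4,t-4) <= C(N-2,t-2)^2) shows that i collides in a large share of
   the t-subsets; averaging over i then gives one t-subset C' with
   sum_i (|X_i| - l) <= 4(N - l)|T_S(C')|, and with t ~ 10 sqrt(l/gamma) the
   arithmetic turns this into |T_S(C')| >= sigma |S| / 4. *)

Section SubsetCounting.
Variable T : finType.

Lemma exists_subset_card (D : {set T}) k : (k <= #|D|)%N ->
  exists2 B : {set T}, B \subset D & #|B| = k.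
Proof.
move=> kD; have : (0 < #|[set B : {set T} | B \subset D & #|B| == k]|)%N.
  by rewrite cards_draws bin_gt0.
by case/card_gt0P=> B; rewrite inE => /andP[BD /eqP cB]; exists B.
Qed.

(* The k-subsets of D containing a fixed B \subset D are counted by
   'C(|D| - |B|, k - |B|): they are B joined with a (k - |B|)-subset of D \ B. *)
Lemma card_supersets (D B : {set T}) k : B \subset D -> (#|B| <= k)%N ->
  #|[set A : {set T} | [&& A \subset D, #|A| == k & B \subset A]]| =
  'C(#|D| - #|B|, k - #|B|).
Proof.
move=> BD Bk.
have cDB : #|D :\: B| = (#|D| - #|B|)%N by rewrite cardsD (setIidPr BD).
rewrite -cDB -cards_draws.
set X := [set A : {set T} | A \subset D :\: B & #|A| == (k - #|B|)%N].
have disjB (A : {set T}) : A \subset D :\: B -> [disjoint A & B].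
  move=> sA; rewrite -setI_eq0; apply/eqP/setP=> x; rewrite !inE.
  by apply/andP=> -[/(subsetP sA)]; rewrite !inE => /andP[/negbTE ->].
have joinB_inj : {in X &, injective (fun A => A :|: B)}.
  move=> A1 A2; rewrite !inE => /andP[s1 _] /andP[s2 _] e.
  apply/setP=> x; have := congr1 (fun A : {set T} => x \in A) e; rewrite /= !inE.
  case xB: (x \in B); last by rewrite !orbF.
  by rewrite (disjointFl (disjB _ s1) xB) (disjointFl (disjB _ s2) xB).
rewrite -(card_in_imset joinB_inj); apply: eq_card => A.
rewrite inE; apply/and3P/imsetP.
- case=> AD /eqP cA BA; exists (A :\: B).
    by rewrite inE setSD //= cardsD (setIidPr BA) cA.
  apply/setP=> x; rewrite !inE; case xB: (x \in B) => /=.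
  + by rewrite (subsetP BA).
  + by rewrite orbF.
- case=> A'; rewrite inE => /andP[sA' /eqP cA'] ->; split.
  + by rewrite subUset BD andbT (subset_trans sA' (subsetDl _ _)).
  + by rewrite cardsU (disjoint_setI0 (disjB _ sA')) cards0 subn0 cA' subnK.
  + exact: subsetUr.
Qed.

Lemma exists_ge_average (F : {set T}) (f : T -> nat) V :
  (0 < #|F|)%N -> (#|F| * V <= \sum_(A in F) f A)%N ->
  exists2 A, A \in F & (V <= f A)%N.
Proof.
move=> Fn0 hsum; have [/exists_inP[A AF hA]|] := boolP [exists A in F, V <= f A].
  by exists A.
rewrite negb_exists_in => /forall_inP small; exfalso.
have [A0 A0F] := card_gt0P Fn0.
have V0 : (0 < V)%N by move: (small _ A0F); rewrite -ltnNge; lia.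
have : (\sum_(A in F) f A <= \sum_(A in F) V.-1)%N.
  by apply: leq_sum => A AF; move: (small _ AF); rewrite -ltnNge; lia.
rewrite sum_nat_const; nia.
Qed.

End SubsetCounting.

Section CollisionMatching.
Variables (T U : finType) (g : T -> U).

Definition collision_matching (X : {set T}) (E : {set T * T}) :=
  (forall e, e \in E -> [/\ e.1 \in X, e.2 \in X, e.1 != e.2 & g e.1 = g e.2]) /\
  (forall e e', e \in E -> e' \in E -> e != e' ->
     [disjoint [set e.1; e.2] & [set e'.1; e'.2]]).

Lemma collision_matching_sub X (E E' : {set T * T}) :
  E' \subset E -> collision_matching X E -> collision_matching X E'.
Proof.
move=> /subsetP sE [pairs disj]; split=> [e /sE|e e' /sE eE /sE e'E]; first exact: pairs.
exact: disj.
Qed.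

(* A maximal matching leaves at most one element of X per value of g
   unmatched, hence |X| <= 2|E| + |g(X)|. *)
Lemma maximal_collision_matching (X : {set T}) :
  exists2 E, collision_matching X E & (#|X| <= 2 * #|E| + #|g @: X|)%N.
Proof.
move: {2}#|X| (leqnn #|X|) => k; elim: k X => [|k IH] X Xk.
  exists set0; first by split=> e; rewrite inE.
  by move: Xk; rewrite leqn0 => /eqP ->.
have [/dinjectiveP ginj|] := boolP (dinjectiveb g X).
  exists set0; first by split=> e; rewrite inE.
  by rewrite card_in_imset // cards0.
case/dinjectivePn=> x xX [y]; rewrite !inE => /andP[yx yX] gxy.
have sxyX : [set x; y] \subset X by rewrite subUset !sub1set xX yX.
have cxy : #|[set x; y]| = 2 by rewrite cards2 eq_sym yx.
set X' := X :\: [set x; y].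
have cX' : #|X'| = (#|X| - 2)%N by rewrite cardsD (setIidPr sxyX) cxy.
have X2 : (2 <= #|X|)%N by rewrite -cxy subset_leq_card.
have X'k : (#|X'| <= k)%N by lia.
have [E' [pairs disj] cE'] := IH X' X'k.
have xyE' : (x, y) \notin E' by apply/negP=> /pairs[/=]; rewrite !inE eqxx.
have disj_xy e : e \in E' -> [disjoint [set x; y] & [set e.1; e.2]].
  move=> /pairs[e1 e2 _ _]; rewrite -setI_eq0; apply/eqP/setP=> z; rewrite !inE.
  apply/negP=> /andP[zxy /orP[] /eqP ze]; [move: e1 | move: e2];
    by rewrite -ze !inE zxy.
exists ((x, y) |: E'); first split.
- move=> e; rewrite in_setU1 => /orP[/eqP -> /=|/pairs[]]; first by rewrite eq_sym.
  by rewrite !inE => /andP[_ ->] /andP[_ ->].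
- move=> e e'; rewrite !in_setU1 => /orP[/eqP ->|eE] /orP[/eqP ->|e'E] //=.
  + by rewrite eqxx.
  + by move=> _; apply: disj_xy.
  + by move=> _; rewrite disjoint_sym; apply: disj_xy.
  + exact: disj.
have gX' : (#|g @: X'| <= #|g @: X|)%N by rewrite subset_leq_card ?imsetS ?subsetDl.
rewrite cardsU1 xyE'; lia.
Qed.

End CollisionMatching.

(* Two steps of the absorption identity 'C(N, s+2) (s+2)(s+1) = N (N-1) 'C(N-2, s). *)
Lemma bin_shift2 N s : 'C(N, s.+2) * (s.+2 * s.+1) = N * (N - 1) * 'C(N - 2, s).
Proof.
have h1 := mul_bin_diag N s.+1.
have h2 := mul_bin_diag N.-1 s.
have -> : (N - 2 = N.-1.-1)%N by lia.
have -> : (N - 1 = N.-1)%N by lia.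
by rewrite mulnA [_ * s.+2]mulnC -h1 -mulnA [_ * s.+1]mulnC -h2 !mulnA.
Qed.

(* Log-concavity along the diagonal: C(N,t) C(N-4,t-4) <= C(N-2,t-2)^2. This
   bounds the second moment of the number of matched pairs in a random set. *)
Lemma bin_diag_log_concave N t : (4 <= t <= N)%N ->
  'C(N, t) * 'C(N - 4, t - 4) <= 'C(N - 2, t - 2) ^ 2.
Proof.
case/andP=> t4 tN; have [s ts] : exists s, t = s.+4 by exists (t - 4); lia.
subst t.
have -> : (s.+4 - 4 = s)%N by lia.
have -> : (s.+4 - 2 = s.+2)%N by lia.
set B0 := 'C(N, s.+4); set B2 := 'C(N - 2, s.+2); set B4 := 'C(N - 4, s).
have e0 : B0 * (s.+4 * s.+3) = N * (N - 1) * B2 by rewrite /B0 bin_shift2.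
have e2 : B2 * (s.+2 * s.+1) = (N - 2) * (N - 3) * B4.
  rewrite /B2 bin_shift2; have -> : (N - 2 - 1 = N - 3)%N by lia.
  by have -> : (N - 2 - 2 = N - 4)%N by lia.
have pos : (0 < s.+4 * s.+3 * ((N - 2) * (N - 3)))%N by rewrite !muln_gt0; lia.
rewrite -(leq_pmul2l pos).
have -> : s.+4 * s.+3 * ((N - 2) * (N - 3)) * (B0 * B4) =
   (B0 * (s.+4 * s.+3)) * ((N - 2) * (N - 3) * B4) by ring.
rewrite e0 -e2.
have -> : N * (N - 1) * B2 * (B2 * (s.+2 * s.+1)) =
   (N * s.+2) * ((N - 1) * s.+1) * B2 ^ 2 by ring.
have -> : s.+4 * s.+3 * ((N - 2) * (N - 3)) * B2 ^ 2 =
   (s.+4 * (N - 2)) * (s.+3 * (N - 3)) * B2 ^ 2 by ring.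
have i1 : (N * s.+2 <= s.+4 * (N - 2))%N by nia.
have i2 : ((N - 1) * s.+1 <= s.+3 * (N - 3))%N by nia.
by rewrite leq_mul2r (leq_mul i1 i2) orbT.
Qed.

(* The pointwise inequality behind the second-moment bound: for a count
   y of matched pairs, 3y <= 2[y > 0] + y^2. *)
Lemma three_mul_le_sqr (y : nat) (b : bool) : (0 < y -> b) -> (3 * y <= 2 * b + y ^ 2)%N.
Proof.
case: y => [|y] hb //; rewrite hb // muln1.
by case: y {hb} => [|[|y]] //; nia.
Qed.

(* Each coordinate i in S
   reads an element through val i, X i \subset D0 is a set of elements taking at
   most l values at i, and a coordinate collides in A when two distinct elements
   of A are read equally there. *)
Section CollisionAveraging.
Variables (T I U : finType) (val : I -> T -> U) (D0 : {set T}) (S : {set I})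
  (X : I -> {set T}) (l t : nat).
Hypotheses (XD : forall i, i \in S -> X i \subset D0)
  (Xl : forall i, i \in S -> (#|val i @: X i| <= l)%N)
  (t4 : (4 <= t)%N) (tN : (t <= #|D0|)%N)
  (tbig : (#|D0| * (#|D0| - 1) <= t * (t - 1) * (#|D0| - l))%N).

Definition collisions (A : {set T}) : {set I} := [set i in S |
  [exists c1 in A, exists c2 in A, (c1 != c2) && (val i c1 == val i c2)]].

Let N := #|D0|.
Let F := [set A : {set T} | A \subset D0 & #|A| == t].
Let B0 := 'C(N, t).
Let B2 := 'C(N - 2, t - 2).
Let B4 := 'C(N - 4, t - 4).
(* K ~ B0 / B2 ~ (N / t)^2 is the matching size at which the second-moment
   bound saturates. *)
Let K := B0 %/ B2.

Lemma sum_supersets (B : {set T}) : B \subset D0 -> (#|B| <= t)%N ->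
  \sum_(A in F) (B \subset A : nat) = 'C(N - #|B|, t - #|B|).
Proof.
move=> BD Bt; rewrite -card_supersets // -sum1_card.
rewrite [RHS]big_mkcond [LHS]big_mkcond; apply: eq_bigr => A _; rewrite !inE.
by case: (A \subset D0); case: (#|A| == t); case: (B \subset A).
Qed.

Lemma B2_gt0 : (0 < B2)%N. Proof. by rewrite bin_gt0; lia. Qed.

(* Double counting ordered pairs: B0 t(t - 1) = N(N - 1) B2. *)
Lemma B0_absorb2 : B0 * (t * (t - 1)) = N * (N - 1) * B2.
Proof.
have [s ts] : exists s, t = s.+2 by exists (t - 2); lia.
by rewrite /B0 /B2 ts bin_shift2; do 2 f_equal; lia.
Qed.

(* K = floor(B0 / B2) >= 1 loses at most a factor 2. *)
Lemma B0_le_2KB2 : (B0 <= 2 * K * B2)%N.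
Proof.
have K1 : (1 <= K)%N.
  rewrite divn_gt0 ?B2_gt0 //.
  have pos : (0 < t * (t - 1))%N by rewrite muln_gt0; lia.
  rewrite -(leq_pmul2r pos) B0_absorb2 mulnC leq_mul2r.
  by apply/orP; right; apply: leq_mul; lia.
have := divn_eq B0 B2; have := ltn_pmod B0 B2_gt0; rewrite -/K; nia.
Qed.

(* By log-concavity, K B4 <= B2: overlaps of matched pairs in the second
   moment cost no more than the first moment. *)
Lemma KB4_le_B2 : (K * B4 <= B2)%N.
Proof.
rewrite -(leq_pmul2r B2_gt0); apply: leq_trans (bin_diag_log_concave _); last by rewrite t4.
by rewrite mulnAC leq_mul // leq_divM.
Qed.

(* The choice of t (hypothesis tbig) makes B0 <= B2 (N - l). *)
Lemma B0_le_B2 : (B0 <= B2 * (N - l))%N.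
Proof.
have pos : (0 < t * (t - 1))%N by rewrite muln_gt0; lia.
rewrite -(leq_pmul2r pos) B0_absorb2.
have -> : B2 * (N - l) * (t * (t - 1)) = (t * (t - 1) * (N - l)) * B2 by ring.
by rewrite leq_mul2r tbig orbT.
Qed.

(* Second-moment step: if E is a matching of collisions at i with |E| <= K,
   then with Y(A) the number of pairs of E inside A, summing
   3 Y <= 2 [i collides in A] + Y^2 over A gives |E| B2 <= 2 #{A : i collides}. *)
Lemma matching_coverage i (E : {set T * T}) : i \in S ->
  collision_matching (val i) (X i) E -> (#|E| <= K)%N ->
  (#|E| * B2 <= 2 * \sum_(A in F) (i \in collisions A))%N.
Proof.
move=> iS [pairs disj] EK.
pose pe (e : T * T) := [set e.1; e.2].
pose Y (A : {set T}) := \sum_(e in E) (pe e \subset A : nat).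
have peD e : e \in E -> pe e \subset D0.
  move=> /pairs[e1 e2 _ _]; apply: subset_trans (XD iS).
  by rewrite subUset !sub1set e1 e2.
have pe2 e : e \in E -> #|pe e| = 2 by move=> /pairs[_ _ ne _]; rewrite cards2 ne.
have pe4 e e' : e \in E -> e' \in E -> e != e' -> #|pe e :|: pe e'| = 4.
  move=> eE e'E ee'; rewrite cardsU (disjoint_setI0 (disj _ _ eE e'E ee')) cards0.
  by rewrite !pe2.
have pointwise A : (3 * Y A <= 2 * (i \in collisions A) + Y A ^ 2)%N.
  apply: three_mul_le_sqr; rewrite lt0n sum_nat_eq0 negb_forall_in.
  case/exists_inP=> e eE; rewrite eqb0 negbK => sA; rewrite inE iS /=.
  have [e1 e2 ne ge] := pairs _ eE.
  apply/exists_inP; exists e.1; first by apply: (subsetP sA); rewrite !inE eqxx.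
  apply/exists_inP; exists e.2; first by apply: (subsetP sA); rewrite !inE eqxx orbT.
  by rewrite ne ge eqxx.
have first_moment : \sum_(A in F) Y A = #|E| * B2.
  rewrite exchange_big /= -sum_nat_const; apply: eq_bigr => e eE.
  by rewrite sum_supersets ?peD // pe2 // (leq_trans _ t4).
have second_moment : \sum_(A in F) Y A ^ 2 = #|E| * (B2 + (#|E| - 1) * B4).
  have -> : \sum_(A in F) Y A ^ 2 =
      \sum_(A in F) \sum_(e in E) \sum_(e' in E) (pe e :|: pe e' \subset A : nat).
    apply: eq_bigr => A _; rewrite expnS expn1 /Y big_distrlr /=.
    by apply: eq_bigr => e _; apply: eq_bigr => e' _; rewrite subUset mulnb.
  rewrite exchange_big /= -sum_nat_const; apply: eq_bigr => e eE.
  rewrite exchange_big /= (bigD1 e) //= setUid sum_supersets ?peD ?pe2 ?(leq_trans _ t4) //.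
  congr (_ + _); rewrite (eq_bigr (fun _ => B4)); last first.
    move=> e' /andP[e'E ne]; have B4e : #|pe e :|: pe e'| = 4 by rewrite pe4 // eq_sym.
    by rewrite sum_supersets ?B4e // subUset !peD.
  rewrite sum_nat_const (cardD1 e E) eE add1n subn1 /=.
  by congr (_ * _); apply: eq_card => x; rewrite !inE andbC.
have summed : (\sum_(A in F) 3 * Y A <=
                \sum_(A in F) (2 * (i \in collisions A) + Y A ^ 2))%N.
  by apply: leq_sum => A _; apply: pointwise.
rewrite -big_distrr /= big_split /= -big_distrr /= first_moment second_moment in summed.
have : ((#|E| - 1) * B4 <= B2)%N by apply: leq_trans KB4_le_B2; apply: leq_mul => //; lia.
move/(leq_mul (leqnn #|E|)); rewrite mulnDr in summed.
set c := \sum_(_ in F) _ in summed *; lia.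
Qed.

(* Each coordinate collides in many t-subsets: a maximal matching of
   collisions in X i (truncated to size K) feeds matching_coverage. *)
Lemma coordinate_coverage i : i \in S ->
  (B0 * (#|X i| - l) <= 4 * (N - l) * \sum_(A in F) (i \in collisions A))%N.
Proof.
move=> iS; set c := \sum_(A in F) _.
have XN : (#|X i| <= N)%N by rewrite subset_leq_card ?XD.
have [E mE XE] := maximal_collision_matching (val i) (X i).
case: (leqP K #|E|) => [KE|EK].
  have [E' E'E cE'] := exists_subset_card KE.
  have := matching_coverage iS (collision_matching_sub E'E mE) (eq_leq cE').
  rewrite cE' => covK; have := B0_le_2KB2.
  have : (#|X i| - l <= N - l)%N by lia.
  nia.
have := matching_coverage iS mE (ltnW EK).
have : (#|X i| - l <= 2 * #|E|)%N by have := Xl iS; lia.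
have := B0_le_B2; nia.
Qed.

Lemma exists_collision_rich_subset : exists A : {set T}, [/\ A \subset D0, #|A| = t &
  (\sum_(i in S) (#|X i| - l) <= 4 * (N - l) * #|collisions A|)%N].
Proof.
have cardF : #|F| = B0 by rewrite cards_draws.
have card_collisions A : #|collisions A| = \sum_(i in S) (i \in collisions A).
  rewrite -sum1_card [LHS]big_mkcond [RHS]big_mkcond; apply: eq_bigr => i _.
  by rewrite !inE; case: (i \in S).
have Fpos : (0 < #|F|)%N by rewrite cardF bin_gt0.
have total : (#|F| * \sum_(i in S) (#|X i| - l) <=
              \sum_(A in F) 4 * (N - l) * #|collisions A|)%N.
  have -> : (\sum_(A in F) 4 * (N - l) * #|collisions A| =
      \sum_(i in S) 4 * (N - l) * \sum_(A in F) (i \in collisions A))%N.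
    under eq_bigr => A _ do rewrite card_collisions big_distrr /=.
    by rewrite exchange_big; apply: eq_bigr => i _; rewrite big_distrr.
  rewrite cardF big_distrr /=; apply: leq_sum => i iS.
  exact: coordinate_coverage.
have [A] := exists_ge_average Fpos total.
by rewrite inE => /andP[AD /eqP At] hA; exists A.
Qed.

End CollisionAveraging.

Local Open Scope ring_scope.

Lemma natrB_ge (R : numDomainType) (a b : nat) : (a%:R - b%:R : R) <= (a - b)%N%:R.
Proof.
case: (leqP b a) => ba; first by rewrite natrB.
have -> : (a - b)%N = 0%N by lia.
by rewrite subr_le0 ler_nat; lia.
Qed.

(* The hypothesis rho < 1 - 1/sqrt(1 + alpha) says exactly that
   gamma = (1 + alpha)(1 - rho)^2 - 1 is positive; also gamma <= alpha. *)
Lemma gamma_bounds (R : rcfType) (alpha rho : R) :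
  0 < alpha -> 0 <= rho -> rho < 1 - (Num.sqrt (1 + alpha))^-1 ->
  [/\ rho < 1, 0 < (1 + alpha) * (1 - rho) ^+ 2 - 1
             & (1 + alpha) * (1 - rho) ^+ 2 - 1 <= alpha].
Proof.
move=> a0 r0 rlt; have sq0 : 0 < Num.sqrt (1 + alpha) by rewrite sqrtr_gt0; lra.
have r1 : rho < 1.
  have : 0 < (Num.sqrt (1 + alpha))^-1 by rewrite invr_gt0.
  lra.
have sq_gt1 : 1 < ((1 - rho) * Num.sqrt (1 + alpha)) ^+ 2.
  have : 1 < (1 - rho) * Num.sqrt (1 + alpha) by rewrite -ltr_pdivrMr // div1r; lra.
  by move=> h; rewrite expr2; nra.
rewrite exprMn sqr_sqrtr in sq_gt1; last lra.
have : (1 - rho) ^+ 2 <= 1 by rewrite expr2; nra.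
split=> //; [lra | nra].
Qed.

Lemma integer_between (R : archiRealFieldType) (x : R) (k : nat) :
  0 <= x -> x < k%:R -> exists N : nat, [/\ x < N%:R, N%:R <= x + 1 & (N <= k)%N].
Proof.
move=> x0 xk; have /andP[lo hi] := truncn_itv x0.
exists (Num.truncn x).+1; split=> //; first by rewrite -natr1 lerD2r.
by rewrite -(ltr_nat R); apply: le_lt_trans xk.
Qed.

(* Arithmetic core of the choice of t: if t - 1 >= 9 sqrt(l / gamma) then
   N(N - 1) <= t(t - 1)(N - l) for N in (l(1 + alpha), l(1 + alpha) + 1]. *)
Lemma pair_count_bound (R : realFieldType) (g alpha s T0 Nr lr : R) :
  0 < g -> g <= alpha -> alpha < 1 -> 1 <= lr -> s ^+ 2 * g = lr -> 0 <= s ->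
  9 * s <= T0 - 1 -> lr * (1 + alpha) < Nr -> Nr <= lr * (1 + alpha) + 1 ->
  Nr * (Nr - 1) <= T0 * (T0 - 1) * (Nr - lr).
Proof.
move=> g0 ga a1 l1 sg s0 sT lo hi.
have T_sq : 81 * s ^+ 2 <= T0 * (T0 - 1).
  have h9 : 0 <= 9 * s by lra.
  have := ler_pM h9 h9 sT sT.
  have : (T0 - 1) * (T0 - 1) <= T0 * (T0 - 1) by rewrite ler_wpM2r; lra.
  rewrite expr2; lra.
have gap : lr * g <= Nr - lr.
  have : lr * g <= lr * alpha by rewrite ler_wpM2l //; lra.
  lra.
have large : 81 * lr * lr <= T0 * (T0 - 1) * (Nr - lr).
  have -> : 81 * lr * lr = (81 * s ^+ 2) * (lr * g) by rewrite -sg; ring.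
  by apply: ler_pM => //; [rewrite mulr_ge0 ?sqr_ge0 | rewrite mulr_ge0]; lra.
have N3 : Nr <= 3 * lr.
  have : lr * alpha <= lr * 1 by rewrite ler_wpM2l //; lra.
  lra.
have N0 : 0 <= Nr.
  have : 0 <= lr * (1 + alpha) by rewrite mulr_ge0 //; lra.
  lra.
have N9 := ler_pM N0 N0 N3 N3.
have l2 : 0 <= lr * lr by rewrite mulr_ge0 //; lra.
apply: le_trans large; nra.
Qed.

(* The sample size t = min(floor(10 sqrt(l / gamma)), N) meets all the
   requirements of the averaging argument. *)
Lemma sample_size (R : realType) (alpha g : R) (l N : nat) :
  0 < g -> g <= alpha -> alpha < 1 -> 4 / g <= l%:R ->
  l%:R * (1 + alpha) < N%:R -> N%:R <= l%:R * (1 + alpha) + 1 ->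
  exists t : nat, [/\ (4 <= t)%N, (t <= N)%N, t%:R <= 10 * Num.sqrt (l%:R / g)
                   & (N * (N - 1) <= t * (t - 1) * (N - l))%N].
Proof.
move=> g0 ga a1 lg lo hi.
have l4 : (4 < l)%N.
  have : 4 < 4 / g by rewrite ltr_pdivlMr //; lra.
  by move=> h; rewrite -(ltr_nat R); apply: lt_le_trans lg.
have lN : (l < N)%N.
  rewrite -(ltr_nat R); apply: le_lt_trans lo.
  by rewrite ler_peMr ?ler0n //; lra.
set s := Num.sqrt (l%:R / g).
have s0 : 0 <= s := sqrtr_ge0 _.
have s_sq : s ^+ 2 * g = l%:R by rewrite sqr_sqrtr ?divfK ?gt_eqF // divr_ge0 // ltW.
have s2 : 2 <= s.
  have l4r : (4 < l%:R :> R) by rewrite ltr_nat.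
  have : 4 * g <= l%:R by lra.
  rewrite -s_sq expr2; nra.
have s10 : 0 <= 10 * s by lra.
have [t0 t0lo t0hi] : exists2 t0 : nat, t0%:R <= 10 * s & 10 * s < t0.+1%:R.
  by have /andP[] := truncn_itv s10; exists (Num.truncn (10 * s)).
have t0big : (9 * s <= t0%:R - 1) by rewrite -natr1 in t0hi; lra.
have t04 : (4 <= t0)%N by rewrite -(ler_nat R); lra.
exists (minn t0 N); split.
- by rewrite leq_min t04 ltnW // (ltn_trans l4 lN).
- exact: geq_minr.
- by apply: le_trans t0lo; rewrite ler_nat geq_minl.
case: (leqP t0 N) => [t0N|Nt0].
  have t01 : (1 <= t0)%N by apply: leq_trans t04.
  have N1 : (1 <= N)%N by apply: leq_trans t0N.
  rewrite -(ler_nat R) !natrM !natrB ?(ltnW lN) //.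
  apply: (pair_count_bound g0 ga a1 _ s_sq s0 t0big lo hi).
  by rewrite ler1n ltnW // (ltn_trans _ l4).
by rewrite leq_pmulr // subn_gt0.
Qed.

Lemma collision_fraction_bound (R : realFieldType) (alpha rho Nr lr mr cr : R) :
  0 <= alpha -> 0 <= rho -> rho < 1 -> 0 <= lr -> lr * (1 + alpha) < Nr ->
  1 < (1 + alpha) * (1 - rho) ^+ 2 -> 0 <= mr ->
  Nr * (mr - rho * mr) - mr * lr <= 4 * (Nr - lr) * cr ->
  (1 - rho) / (2 - rho) * mr / 4 <= cr.
Proof.
move=> a0 r0 r1 l0 lN g0 m0 avg.
have lN' : lr < Nr.
  have : lr <= lr * (1 + alpha) by rewrite ler_peMr //; lra.
  lra.
have sq0 : 0 <= (1 - rho) ^+ 2 := sqr_ge0 _.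
have l_le : lr <= Nr * (1 - rho) ^+ 2.
  have : lr * 1 <= lr * ((1 + alpha) * (1 - rho) ^+ 2) by rewrite ler_wpM2l // ltW.
  have := ler_wpM2r sq0 (ltW lN); rewrite mulr1 mulrA; lra.
have shrink : (Nr - lr) * (1 - rho) <= (Nr * (1 - rho) - lr) * (2 - rho).
  have -> : (Nr * (1 - rho) - lr) * (2 - rho) =
    (Nr - lr) * (1 - rho) + (Nr * (1 - rho) ^+ 2 - lr) by ring.
  lra.
have key : (Nr - lr) * ((1 - rho) * mr) <= (Nr - lr) * (4 * (2 - rho) * cr).
  have p2 : 0 <= 2 - rho by lra.
  have := ler_wpM2r m0 shrink; have := ler_wpM2r p2 avg.
  have -> : (Nr * (mr - rho * mr) - mr * lr) * (2 - rho) =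
    (Nr * (1 - rho) - lr) * (2 - rho) * mr by ring.
  have -> : 4 * (Nr - lr) * cr * (2 - rho) = (Nr - lr) * (4 * (2 - rho) * cr) by ring.
  have -> : (Nr - lr) * (1 - rho) * mr = (Nr - lr) * ((1 - rho) * mr) by ring.
  lra.
rewrite ler_pM2l in key; last lra.
have -> : (1 - rho) / (2 - rho) * mr / 4 = ((1 - rho) * mr) / (4 * (2 - rho)).
  by field; lra.
by rewrite ler_pdivrMr ?[cr * _]mulrC //; apply: mulr_gt0; lra.
Qed.

Lemma not_list_recoverable_witness (R : realType) n q (S : {set 'I_n})
    (D : {set sword n q}) (rho : R) (l : nat) (L : R) :
  ~ list_recoverable S D rho l L ->
  exists2 A : 'I_n -> {set 'I_q}, (forall i, i \in S -> #|A i| <= l)%N &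
    L < #|[set c in D | #|disagree S A c|%:R <= rho * #|S|%:R]|%:R.
Proof.
move=> nLR; apply: NNPP => none; apply: nLR => A Al.
by rewrite leNgt; apply/negP => big; apply: none; exists A.
Qed.

Section Agreement.
Variables (n q : nat) (S : {set 'I_n}) (A : 'I_n -> {set 'I_q}).

Lemma disagree_sub (c : sword n q) : disagree S A c \subset S.
Proof. by apply/subsetP => i; rewrite inE => /andP[]. Qed.

Definition agreeing (D0 : {set sword n q}) (i : 'I_n) : {set sword n q} :=
  [set c in D0 | i \notin disagree S A c].

Lemma sum_card_agreeing (D0 : {set sword n q}) :
  (\sum_(i in S) #|agreeing D0 i| = \sum_(c in D0) (#|S| - #|disagree S A c|))%N.
Proof.
have -> : (\sum_(i in S) #|agreeing D0 i| =
    \sum_(i in S) \sum_(c in D0) (i \notin disagree S A c : nat))%N.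
  apply: eq_bigr => i _; rewrite -sum1_card big_mkcond [RHS]big_mkcond.
  by apply: eq_bigr => c _; rewrite inE; case: (c \in D0); case: (_ \notin _).
rewrite exchange_big; apply: eq_bigr => c _.
have -> : (#|S| - #|disagree S A c|)%N = #|S :\: disagree S A c|.
  by rewrite cardsD (setIidPr (disagree_sub c)).
rewrite -sum1_card big_mkcond [RHS]big_mkcond.
apply: eq_bigr => i _; rewrite in_setD.
by case: (i \in S); case: (i \in disagree S A c).
Qed.

Lemma card_symbols_agreeing (D0 : {set sword n q}) i : i \in S ->
  (#|(fun c : sword n q => c i) @: agreeing D0 i| <= #|A i|)%N.
Proof.
move=> iS; rewrite -(card_imset (A i) (@Some_inj _)); apply: subset_leq_card.
apply/subsetP => _ /imsetP[c + ->]; rewrite !inE iS /= => /andP[_].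
by case: (c i) => [x|] //; rewrite negbK => xA; rewrite imset_f.
Qed.

End Agreement.

Lemma collision_rich_subcode (R : realDomainType) n q (S : {set 'I_n})
    (A : 'I_n -> {set 'I_q}) (D0 : {set sword n q}) (rho : R) (l t : nat) :
  (forall i, i \in S -> #|A i| <= l)%N ->
  (forall c, c \in D0 -> #|disagree S A c|%:R <= rho * #|S|%:R) ->
  (4 <= t)%N -> (t <= #|D0|)%N ->
  (#|D0| * (#|D0| - 1) <= t * (t - 1) * (#|D0| - l))%N ->
  exists C' : {set sword n q}, [/\ C' \subset D0, #|C'| = t &
    #|D0|%:R * (#|S|%:R - rho * #|S|%:R) - #|S|%:R * l%:R
      <= 4 * (#|D0|%:R - l%:R) * #|collide S C'|%:R].
Proof.
move=> Al Dagree t4 tN tbig.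
(* tbig forces l <= |D0|, as |D0| >= t >= 4 *)
have lN : (l <= #|D0|)%N.
  move: t4 tN tbig; move: #|D0| => N; clear => t4 tN tbig.
  rewrite leqNgt; apply/negP => Nl; move: tbig.
  have -> : (N - l = 0)%N by apply/eqP; rewrite subn_eq0 ltnW.
  by rewrite muln0 leqn0 muln_eq0; lia.
have XD i : i \in S -> agreeing S A D0 i \subset D0.
  by move=> _; apply/subsetP => c; rewrite inE => /andP[].
have Xl i : i \in S -> (#|(fun c : sword n q => c i) @: agreeing S A D0 i| <= l)%N.
  by move=> iS; apply: leq_trans (@card_symbols_agreeing n q S A D0 i iS) (Al _ iS).
have [C' [C'D cC' avg]] := exists_collision_rich_subset XD Xl t4 tN tbig.
have hcol : collisions (fun i (c : sword n q) => c i) S C' = collide S C'.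
  by apply/setP => i; rewrite !inE.
rewrite hcol in avg.
exists C'; split=> //.
have mass : #|D0|%:R * (#|S|%:R - rho * #|S|%:R) <=
            \sum_(i in S) (#|agreeing S A D0 i|%:R : R).
  rewrite -natr_sum sum_card_agreeing natr_sum mulr_natl -sumr_const.
  apply: ler_sum => c cD.
  by rewrite natrB ?subset_leq_card ?disagree_sub // lerD2l lerN2 Dagree.
have excess : \sum_(i in S) (#|agreeing S A D0 i|%:R : R) - #|S|%:R * l%:R <=
              (\sum_(i in S) (#|agreeing S A D0 i| - l))%N%:R.
  rewrite natr_sum mulr_natl -sumr_const -sumrB.
  by apply: ler_sum => i _; apply: natrB_ge.
rewrite -(ler_nat R) !natrM natrB // in avg.
by apply: le_trans avg; apply: le_trans excess; rewrite lerD2r.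
Qed.

Unset Implicit Arguments.

Theorem mainTheorem3 (R : realType) (alpha rho : R) (l n q : nat)
    (C : {set word n q}) (S : {set 'I_n}) :
  0 < alpha -> alpha < 1 ->
  0 <= rho -> rho < 1 - (Num.sqrt (1 + alpha))^-1 ->
  (0 < l)%N ->
  4 / ((1 + alpha) * (1 - rho) ^+ 2 - 1) <= l%:R ->
  ~ list_recoverable S (puncture C S) rho l (l%:R * (1 + alpha)) ->
  exists C' : {set sword n q},
    [/\ C' \subset puncture C S,
        #|C'|%:R <= 10 * Num.sqrt (l%:R / ((1 + alpha) * (1 - rho) ^+ 2 - 1))
      & (1 - rho) / (2 - rho) * #|S|%:R / 4 <= #|collide S C'|%:R].
Proof.
move=> a0 a1 r0 rlt _ lg nLR.
have [r1 g0 ga] := gamma_bounds a0 r0 rlt.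
have [A Al Dbig] := not_list_recoverable_witness nLR.
set D := [set c in puncture C S | _] in Dbig.
have DC : D \subset puncture C S by apply/subsetP => c; rewrite inE => /andP[].
have x0 : 0 <= l%:R * (1 + alpha) by rewrite mulr_ge0 ?ler0n //; lra.
have [N [xN Nx ND]] := integer_between x0 Dbig.
have [D0 D0D cD0] := exists_subset_card ND.
have [t [t4 tN tle tbig]] := sample_size g0 ga a1 lg xN Nx.
rewrite -cD0 in xN tN tbig.
have D0agree c : c \in D0 -> #|disagree S A c|%:R <= rho * #|S|%:R.
  by move/(subsetP D0D); rewrite inE => /andP[].
have [C' [C'D0 cC' avg]] := collision_rich_subcode Al D0agree t4 tN tbig.
exists C'; split.
- exact: subset_trans C'D0 (subset_trans D0D DC).
- by rewrite cC'; exact: tle.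
- apply: collision_fraction_bound (ltW a0) r0 r1 (ler0n _ _) xN _ (ler0n _ _) avg.
  by rewrite -subr_gt0.
Qed.
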